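(* Let $V$ be a finite-dimensional irreducible type $\mathbf 1$ representation of $U_qL\mathfrak g$, and let $v\in V\setminus\{0\}$. If $d^+(v)>0$, then there exists $i\in\hat I$ such that $E_i\cdot v\neq0$ and $d^+(E_i\cdot v)<d^+(v)$.
   Context: $\mathfrak g$ is a finite-dimensional complex simple Lie algebra with vertex set $I$, coroots $h_i$, weight lattice $P$, positive root cone $Q^+$; $\hat I=\{0\}\cup I$ is the vertex set of the untwisted affine Dynkin diagram with extended Cartan matrix $(a_{ij})$, symmetrizers $d_i$, $q_i=q^{d_i}$, $\mathbb F=\overline{\mathbb C(q)}$, $\delta=\sum_ia_i\alpha_i$ ($a_0=1$). $U_qL\mathfrak g$ is the $\mathbb F$-algebra generated by $E_i,F_i,K_i^{\pm1}$ ($i\in\hat I$) with the Drinfeld–Jimbo relations ($K_i$ commuting and invertible, $K_iE_jK_i^{-1}=q_i^{a_{ij}}E_j$, $K_iF_jK_i^{-1}=q_i^{-a_{ij}}F_j$, $[E_i,F_j]=\delta_{ij}(K_i-K_i^{-1})/(q_i-q_i^{-1})$, quantum Serre relations) and $\prod_iK_i^{a_i}=1$. Type $\mathbf 1$: the $K_i$ act semisimply with eigenvalues in $q^{\mathbb Z}$. Such $V$ decomposes as $V=\bigoplus_{\lambda\in P}V_\lambda$, $V_\lambda=\{v:K_iv=q_i^{\lambda(h_i)}v\ \forall i\in I\}$; $\mathrm{Supp}(V)=\{\lambda:V_\lambda\neq0\}$. Let $\lambda_0$ be the highest weight of $V$, i.e. the element of $\mathrm{Supp}(V)$ with $\mathrm{Supp}(V)\subset\lambda_0-Q^+$.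 Every $v\ne0$ is uniquely $v=\sum_{\lambda\in\mathrm{Supp}(v)}v_\lambda$ with $0\ne v_\lambda\in V_\lambda$. For $\lambda\in\mathrm{Supp}(V)$ and $0\neq v_\lambda\in V_\lambda$, $d^+(v_\lambda)$ is the minimal $\ell\in\mathbb Z_{\ge0}$ for which there is $(i_1,\dots,i_\ell)\in\hat I^\ell$ with $E_{i_1}\cdots E_{i_\ell}v_\lambda\in V_{\lambda_0}\setminus\{0\}$ (such $\ell$ exists); for general $v\neq0$, $d^+(v)=\min\{d^+(v_\lambda):\lambda\in\mathrm{Supp}(v)\}$. *)

From HB Require Import structures.
From mathcomp Require Import all_boot all_order all_algebra.
From mathcomp Require Import reals.
From mathcomp Require Import complex.
From Stdlib Require Import ClassicalEpsilon.

Set Implicit Arguments.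
Unset Strict Implicit.
Unset Printing Implicit Defensive.

Import Order.TTheory GRing.Theory Num.Theory.
Local Open Scope ring_scope.

(* C is modelled as R[i] for a realType R.  F is characterised up to   *)
(* isomorphism: an algebraically closed field with an embedding of C,  *)
(* an element q transcendental over C, and F algebraic over C(q).      *)
Definition is_closure_of_Cq (R : realType) (F : closedFieldType)
    (iota : {rmorphism R[i] -> F}) (q : F) : Prop :=
  (forall p : {poly R[i]}, p != 0 -> (map_poly iota p).[q] != 0) /\
  (forall x : F, exists P : {poly {poly R[i]}},
      P != 0 /\ (map_poly (fun c => (map_poly iota c).[q]) P).[x] = 0).

(* extension.  Convention: C i j = alpha_j(h_i).                       *)
Section Cartan.
Variable I : finType.

(* weights lambda in P, recorded by the values lambda(h_i), i in I *)
Definition weight := {ffun I -> int}.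

Variable C : I -> I -> int.
Variable d : I -> nat.

(* C is the Cartan matrix of a finite-dimensional complex simple Lie
   algebra (finite type, indecomposable), d are its (standard,
   coprime) symmetrizers: d_i C_ij = d_j C_ji. *)
Record finite_cartan : Prop := {
  fc_nonempty : exists i : I, True;
  fc_diag : forall i, C i i = 2;
  fc_offdiag : forall i j, i != j -> C i j <= 0;
  fc_dpos : forall i, (0 < d i)%N;
  fc_sym : forall i j, (d i)%:Z * C i j = (d j)%:Z * C j i;
  fc_posdef : forall x : {ffun I -> int}, x != 0 ->
      0 < \sum_i \sum_j x i * (d i)%:Z * C i j * x j;
  fc_indec : forall J : {set I}, J != set0 -> J != setT ->
      exists i j, [/\ i \in J, j \notin J & C i j != 0];
  fc_dnorm : exists i, d i = 1%N
}.

(* pairing <beta, h_i> for beta in the root lattice, given by its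
   coordinates on the simple roots *)
Definition pairing (b : {ffun I -> int}) (i : I) : int :=
  \sum_j b j * C i j.

Definition bil (b c : {ffun I -> int}) : int :=
  \sum_k \sum_l b k * c l * (d k)%:Z * C k l.

Definition sroot (i : I) : {ffun I -> int} := [ffun j => (i == j)%:Z].

(* the root system: Weyl-group orbit of the simple roots *)
Inductive is_root : {ffun I -> int} -> Prop :=
| root_simple i : is_root (sroot i)
| root_refl i b : is_root b ->
    is_root [ffun j => b j - pairing b i * (i == j)%:Z].

Definition highest_root (th : {ffun I -> int}) : Prop :=
  is_root th /\ forall b, is_root b -> forall j, b j <= th j.

Variable th : {ffun I -> int}.

(* hat I = {0} u I, with 0 represented by None *)
Definition Ihat := option I.

(* extended Cartan matrix: a_ij = alpha_j(h_i), alpha_0 = delta - theta,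
   h_0 = c - theta^vee *)
Definition acm (i j : Ihat) : int :=
  match i, j with
  | Some i, Some j => C i j
  | Some i, None => - pairing th i
  | None, Some j => - ((2 * bil th (sroot j)) %/ bil th th)%Z
  | None, None => 2
  end.

Definition dsym (i : Ihat) : nat :=
  match i with
  | Some i => d i
  | None => (absz (bil th th) %/ 2)%N
  end.

(* delta = sum_i a_i alpha_i, a_0 = 1, a_i = coefficient of theta *)
Definition mark (i : Ihat) : nat :=
  match i with
  | Some i => absz (th i)
  | None => 1%N
  end.

End Cartan.

Section QNum.
Variable F : fieldType.
Definition qint (x : F) (m : nat) : F := (x ^+ m - x ^- m) / (x - x^-1).
Definition qfact (x : F) (m : nat) : F := \prod_(1 <= k < m.+1) qint x k.
Definition qbinom (x : F) (m r : nat) : F :=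
  qfact x m / (qfact x r * qfact x (m - r)).
End QNum.

(* classical minimum of a set of naturals (0 if the set is empty; in
   the paper the relevant sets are always nonempty) *)
Definition nmin (P : nat -> Prop) : nat :=
  match excluded_middle_informative (exists m, P m) with
  | left _ => epsilon (inhabits 0%N)
                (fun m => P m /\ forall k, P k -> (m <= k)%N)
  | right _ => 0%N
  end.

(* Finite-dimensional representations of U_q L g on V = F^n (column   *)
(* vectors), given by the matrices of E_i, F_i, K_i, K_i^{-1}.         *)
Section Rep.
Variables (I : finType) (C : I -> I -> int) (d : I -> nat)
          (th : {ffun I -> int}).
Variables (F : fieldType) (q : F) (n : nat).
Variables (E Fo K Ki : Ihat I -> 'M[F]_n).

Local Notation a := (acm C d th).
Definition qi (i : Ihat I) : F := q ^+ dsym C d th i.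

(* Drinfeld-Jimbo relations of U_q L g (with prod K_i^{a_i} = 1) *)
Record ULg_rep : Prop := {
  rep_KKi : forall i, K i * Ki i = 1 /\ Ki i * K i = 1;
  rep_Kcomm : forall i j, K i * K j = K j * K i;
  rep_KE : forall i j, K i * E j * Ki i = qi i ^ a i j *: E j;
  rep_KF : forall i j, K i * Fo j * Ki i = qi i ^ (- a i j) *: Fo j;
  rep_EF : forall i j, E i * Fo j - Fo j * E i =
      if i == j then (qi i - (qi i)^-1)^-1 *: (K i - Ki i) else 0;
  rep_serreE : forall i j, i != j ->
      let m := absz (1 - a i j) in
      \sum_(r < m.+1) ((-1) ^+ r * qbinom (qi i) m r) *:
          (E i ^+ (m - r) * E j * E i ^+ r) = 0;
  rep_serreF : forall i j, i != j ->
      let m := absz (1 - a i j) in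
      \sum_(r < m.+1) ((-1) ^+ r * qbinom (qi i) m r) *:
          (Fo i ^+ (m - r) * Fo j * Fo i ^+ r) = 0;
  rep_central : \prod_(i : Ihat I) K i ^+ mark th i = 1
}.

(* type 1: each K_i acts semisimply with eigenvalues in q^Z *)
Definition type1 : Prop :=
  forall (i : Ihat I) (v : 'cV[F]_n), exists s : seq (int * 'cV[F]_n),
    v = \sum_(p <- s) p.2 /\
    forall p, p \in s -> K i *m p.2 = q ^ p.1 *: p.2.

Definition irreducible : Prop :=
  (0 < n)%N /\
  forall W : 'cV[F]_n -> Prop,
    W 0 -> (forall (c : F) x y, W x -> W y -> W (c *: x + y)) ->
    (forall i x, W x ->
        [/\ W (E i *m x), W (Fo i *m x), W (K i *m x) & W (Ki i *m x)]) ->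
    (forall x, W x -> x = 0) \/ (forall x, W x).

Definition in_wt (lam : weight I) (x : 'cV[F]_n) : Prop :=
  forall i : I, K (Some i) *m x = qi (Some i) ^ lam i *: x.

Definition in_supp (lam : weight I) : Prop :=
  exists x, x != 0 /\ in_wt lam x.

Definition in_Qplus_diff (lam0 mu : weight I) : Prop :=
  exists c : {ffun I -> nat}, forall i, lam0 i - mu i = \sum_j (c j)%:Z * C i j.

Definition is_highest_weight (lam0 : weight I) : Prop :=
  in_supp lam0 /\ forall mu, in_supp mu -> in_Qplus_diff lam0 mu.

Definition wdecomp (v : 'cV[F]_n) (s : seq (weight I * 'cV[F]_n)) : Prop :=
  [/\ uniq (map fst s),
      forall p, p \in s -> p.2 != 0 /\ in_wt p.1 p.2
    & v = \sum_(p <- s) p.2].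

(* the weight component v_lambda of v (0 if lambda is not in Supp(v)) *)
Definition wcomp (v : 'cV[F]_n) (lam : weight I) : 'cV[F]_n :=
  epsilon (inhabits 0) (fun x => exists s, wdecomp v s /\
     ((lam, x) \in s \/ (lam \notin map fst s /\ x = 0))).

(* E_{i_1} ... E_{i_l} x for s = [:: i_1; ...; i_l] *)
Definition Eword (s : seq (Ihat I)) (x : 'cV[F]_n) : 'cV[F]_n :=
  foldr (fun i y => E i *m y) x s.

Definition dplus_wt (lam0 : weight I) (x : 'cV[F]_n) : nat :=
  nmin (fun l => exists s : seq (Ihat I),
          [/\ size s = l, in_wt lam0 (Eword s x) & Eword s x != 0]).

Definition dplus (lam0 : weight I) (v : 'cV[F]_n) : nat :=
  nmin (fun l => exists lam, wcomp v lam != 0 /\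
                   dplus_wt lam0 (wcomp v lam) = l).

End Rep.

From Pilot Require Import Defs.
From HB Require Import structures.
From mathcomp Require Import all_boot all_order all_algebra.
From mathcomp Require Import reals.
From mathcomp Require Import complex.
From Stdlib Require Import ClassicalEpsilon.

Set Implicit Arguments.
Unset Strict Implicit.
Unset Printing Implicit Defensive.
Import Order.TTheory GRing.Theory Num.Theory.
Local Open Scope ring_scope.

(* Since q is transcendental over C, the characters lam |-> (q_j^(lam j))_j
   separate weights, so weight vectors of distinct weights are linearly
   independent and weight components v_lam are well defined; irreducibility
   makes V the sum of its weight spaces.  If d+(v) = d+(v_lam) > 0 and
   E_{i_1} ... E_{i_l} v_lam is a shortest word landing in V_lam0, then for
   i = i_l the vector E_i v_lam is nonzero, is the (lam + alpha_i)-component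
   of E_i v, and lands in V_lam0 after l - 1 further steps. *)

Lemma nminP (P : nat -> Prop) : (exists m, P m) ->
  P (nmin P) /\ forall k, P k -> (nmin P <= k)%N.
Proof.
move=> exP; rewrite /nmin; case: excluded_middle_informative => // _.
suff exmin : exists m, P m /\ forall k, P k -> (m <= k)%N.
  exact: (epsilon_spec _ _ exmin).
pose Pb m : bool := if excluded_middle_informative (P m) then true else false.
have PbP m : reflect (P m) (Pb m).
  by rewrite /Pb; case: excluded_middle_informative => h; constructor.
have exPb : exists m, Pb m by have [m /PbP] := exP; exists m.
case: (ex_minnP exPb) => m /PbP Pm minm.
by exists m; split=> // k /PbP; apply: minm.
Qed.

Lemma nmin_le (P : nat -> Prop) m : P m -> (nmin P <= m)%N.
Proof. by move=> Pm; apply: (nminP (ex_intro _ m Pm)).2. Qed.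

Lemma nmin_gt0 (P : nat -> Prop) : (0 < nmin P)%N -> exists m, P m.
Proof. by rewrite /nmin; case: excluded_middle_informative. Qed.

Lemma expfz_inj (F : fieldType) (x : F) :
  x != 0 -> (forall k, (0 < k)%N -> x ^+ k != 1) ->
  injective (fun a : int => x ^ a).
Proof.
move=> x_neq0 x_not_unity a b /= xab.
have xab1 : x ^ (a - b) = 1 by rewrite expfzDr // xab -expfzDr // subrr expr0z.
apply/eqP; rewrite -subr_eq0; case: (a - b) xab1 => [[|k]|k] //; rewrite /exprz => xk.
  by have := x_not_unity k.+1 isT; rewrite xk eqxx.
by have := x_not_unity k.+1 isT; rewrite -invr_eq1 xk eqxx.
Qed.

Section Transcendental.
Variables (K : nzRingType) (F : fieldType) (iota : {rmorphism K -> F}) (q : F).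
Hypothesis q_transcendental :
  forall p : {poly K}, p != 0 -> (map_poly iota p).[q] != 0.

Lemma transcendental_neq0 : q != 0.
Proof.
have := q_transcendental (negbT (polyX_eq0 K)).
by rewrite map_polyX hornerX.
Qed.

Lemma transcendental_not_unity_root k : (0 < k)%N -> q ^+ k != 1.
Proof.
move=> k_gt0; have Xk1_neq0 : 'X^k - 1 != 0 :> {poly K}.
  apply: contraTneq isT => /(congr1 (horner^~ 0)) /eqP.
  by rewrite !hornerE hornerXn expr0n eqn0Ngt k_gt0 sub0r oppr_eq0 oner_eq0.
have := q_transcendental Xk1_neq0.
by rewrite rmorphB /= map_polyXn rmorph1 !hornerE subr_eq0.
Qed.

Lemma transcendental_expz_inj e : (0 < e)%N -> injective (fun a : int => (q ^+ e) ^ a).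
Proof.
move=> e_gt0; apply: expfz_inj; first by rewrite expf_neq0 // transcendental_neq0.
by move=> k k_gt0; rewrite -exprM transcendental_not_unity_root // muln_gt0 e_gt0.
Qed.

End Transcendental.

Section WeightSpaces.
Variables (I : finType) (C : I -> I -> int) (d : I -> nat) (th : {ffun I -> int}).
Variables (F : fieldType) (q : F) (n : nat) (K : Ihat I -> 'M[F]_n).

Local Notation inw := (in_wt C d th q K).
Local Notation wdec := (wdecomp C d th q K).
Local Notation wcomp := (wcomp C d th q K).
Local Notation qj j := (qi C d th q (Some j)).

Lemma in_wt0 lam : inw lam 0.
Proof. by move=> i; rewrite mulmx0 scaler0. Qed.

Lemma in_wtD lam x y : inw lam x -> inw lam y -> inw lam (x + y).
Proof. by move=> wx wy i; rewrite mulmxDr wx wy scalerDr. Qed.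

Lemma in_wtZ lam c x : inw lam x -> inw lam (c *: x).
Proof. by move=> wx i; rewrite -scalemxAr wx !scalerA mulrC. Qed.

Lemma in_wtB lam x y : inw lam x -> inw lam y -> inw lam (x - y).
Proof. by move=> wx wy; rewrite -scaleN1r; apply/in_wtD/in_wtZ. Qed.

Lemma in_wt_sum (T : eqType) (r : seq T) (P : pred T) (f : T -> 'cV[F]_n) lam :
  (forall t, t \in r -> P t -> inw lam (f t)) -> inw lam (\sum_(t <- r | P t) f t).
Proof.
move=> wf; rewrite big_seq_cond; apply: (big_ind (inw lam)).
- exact: in_wt0.
- exact: in_wtD.
- by move=> t /andP[]; apply: wf.
Qed.

Definition wt_span (x : 'cV[F]_n) : Prop :=
  exists s : seq (weight I * 'cV[F]_n),
    (forall p, p \in s -> inw p.1 p.2) /\ x = \sum_(p <- s) p.2.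

Definition wpart (s : seq (weight I * 'cV[F]_n)) (lam : weight I) : 'cV[F]_n :=
  \sum_(p <- s | p.1 == lam) p.2.

Lemma in_wt_wpart s lam : (forall p, p \in s -> inw p.1 p.2) -> inw lam (wpart s lam).
Proof. by move=> ws; apply: in_wt_sum => p ps /eqP <-; apply: ws. Qed.

Lemma wpart_notin s lam : lam \notin map fst s -> wpart s lam = 0.
Proof.
move=> lam_s; rewrite /wpart big_seq_cond big1 // => p /andP[ps /eqP p1].
by case/negP: lam_s; rewrite -p1 map_f.
Qed.

Lemma wpart_mem s lam x : uniq (map fst s) -> (lam, x) \in s -> wpart s lam = x.
Proof.
elim: s => [//|p s IH] /= /andP[p_s us].
rewrite inE /wpart big_cons -/(wpart s lam) => /predU1P[lxp | xs].
  by rewrite -lxp /= eqxx wpart_notin ?addr0 // -[lam]/((lam, x).1) lxp.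
have lam_s : lam \in map fst s by apply: (map_f fst xs).
by case: eqP => [p1 | _]; [rewrite p1 lam_s in p_s | apply: IH].
Qed.

Lemma sum_wpart s L : uniq L -> {subset map fst s <= L} ->
  \sum_(lam <- L) wpart s lam = \sum_(p <- s) p.2.
Proof.
move=> uL sL; rewrite /wpart; under eq_bigr do rewrite big_mkcond.
rewrite exchange_big /=; apply: eq_big_seq => p ps.
rewrite (bigD1_seq p.1) ?sL ?map_f //= eqxx big1 ?addr0 // => lam.
by rewrite eq_sym => /negbTE ->.
Qed.

Lemma wt_span_wdecomp x : wt_span x -> exists s, wdec x s.
Proof.
case=> s [ws ->].
exists [seq (lam, wpart s lam) | lam <- undup (map fst s) & wpart s lam != 0].
split.
- by rewrite -map_comp map_id filter_uniq ?undup_uniq.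
- by move=> p /mapP[lam]; rewrite mem_filter => /andP[nz _] ->; split=> //; apply: in_wt_wpart.
- rewrite big_map big_filter -(sum_wpart (L := undup (map fst s))) ?undup_uniq //.
    by rewrite [RHS]big_mkcond; apply: eq_bigr => lam _ /=; case: eqP => [->|].
  by move=> lam; rewrite mem_undup.
Qed.

Hypothesis qj_expz_inj : forall j, injective (fun a : int => qj j ^ a).

(* For lam != mu, K_j - q_j^(mu j) with lam j != mu j kills V_mu and is
   invertible on V_lam, since q_j^(lam j) != q_j^(mu j). *)
Definition wt_sep (lam mu : weight I) : 'M[F]_n :=
  if [pick j | lam j != mu j] is Some j then K (Some j) - (qj j ^ mu j)%:M else 1%:M.

Definition wt_sep_eigen (lam mu nu : weight I) : F :=
  if [pick j | lam j != mu j] is Some j then qj j ^ nu j - qj j ^ mu j else 1.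

Lemma wt_sep_in_wt lam mu nu x : inw nu x -> wt_sep lam mu *m x = wt_sep_eigen lam mu nu *: x.
Proof.
move=> wx; rewrite /wt_sep /wt_sep_eigen; case: pickP => [j _|_].
  by rewrite mulmxBl wx mul_scalar_mx scalerBl.
by rewrite mul1mx scale1r.
Qed.

Lemma wt_sep_eigen_eq0 lam mu : lam != mu -> wt_sep_eigen lam mu mu = 0.
Proof.
move=> lam_mu; rewrite /wt_sep_eigen; case: pickP => [j _|same]; first by rewrite subrr.
by case/eqP: lam_mu; apply/ffunP => j; apply/eqP/negbFE/same.
Qed.

Lemma wt_sep_eigen_neq0 lam mu : wt_sep_eigen lam mu lam != 0.
Proof.
rewrite /wt_sep_eigen; case: pickP => [j lam_mu_j|_]; last exact: oner_neq0.
by rewrite subr_eq0; apply: contra lam_mu_j => /eqP/qj_expz_inj ->.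
Qed.

Lemma prod_wt_sep_in_wt lam mus nu x : inw nu x ->
  (\prod_(mu <- mus) wt_sep lam mu) *m x = (\prod_(mu <- mus) wt_sep_eigen lam mu nu) *: x.
Proof.
move=> wx; elim: mus => [|mu mus IH]; first by rewrite !big_nil mul1mx scale1r.
by rewrite !big_cons -mulmxE -mulmxA IH -scalemxAr (wt_sep_in_wt _ _ wx) scalerA mulrC.
Qed.

Lemma wt_vectors_sum_eq0 (t : seq (weight I * 'cV[F]_n)) :
  uniq (map fst t) -> (forall p, p \in t -> inw p.1 p.2) ->
  \sum_(p <- t) p.2 = 0 -> forall p, p \in t -> p.2 = 0.
Proof.
elim: t => [//|[lam x] t IH] /= /andP[lam_t ut] wt; rewrite big_cons /= => sum0.
have wt' p : p \in t -> inw p.1 p.2 by move=> pt; apply: wt; rewrite inE pt orbT.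
pose S := \prod_(p <- t) wt_sep lam p.1.
have S_t p : p \in t -> S *m p.2 = 0.
  move=> pt; rewrite /S -(big_map fst xpredT) (prod_wt_sep_in_wt _ _ (wt' p pt)).
  rewrite (big_rem p.1) ?map_f //= wt_sep_eigen_eq0 ?mul0r ?scale0r //.
  by apply: contraNneq lam_t => ->; rewrite map_f.
have x0 : x = 0.
  have /eqP := congr1 (mulmx S) sum0.
  rewrite mulmxDr mulmx_sumr big_seq big1 ?addr0 ?mulmx0; last exact: S_t.
  rewrite /S -(big_map fst xpredT) (prod_wt_sep_in_wt _ _ (wt _ (mem_head _ _))).
  rewrite scaler_eq0 prodf_seq_eq0 => /orP[/hasP[mu _ /=]|/eqP //].
  by rewrite (negbTE (wt_sep_eigen_neq0 _ _)).
move=> p; rewrite inE => /predU1P[-> // | pt].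
by apply: IH => //; move: sum0; rewrite x0 add0r.
Qed.

Lemma wpart_uniq v s s' : wdec v s -> wdec v s' -> wpart s =1 wpart s'.
Proof.
case=> us ws vs [us' ws' vs'] lam.
set L := undup (map fst s ++ map fst s').
have [lam_L | ] := boolP (lam \in L); last first.
  by rewrite mem_undup mem_cat negb_or => /andP[? ?]; rewrite !wpart_notin.
have wps (s0 : seq (weight I * 'cV[F]_n)) : (forall p, p \in s0 -> p.2 != 0 /\ inw p.1 p.2) ->
    forall mu, inw mu (wpart s0 mu).
  by move=> w0 mu; apply: in_wt_wpart => p /w0[].
apply/eqP; rewrite -subr_eq0; apply/eqP.
pose t := [seq (mu, wpart s mu - wpart s' mu) | mu <- L].
have lam_t : (lam, wpart s lam - wpart s' lam) \in t by exact: map_f.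
apply: (wt_vectors_sum_eq0 _ _ _ lam_t).
- by rewrite -map_comp map_id undup_uniq.
- by move=> p /mapP[mu _ ->]; apply: in_wtB; apply: wps.
- rewrite big_map sumrB !sum_wpart ?undup_uniq -?vs -?vs' ?subrr // => mu.
    by rewrite mem_undup mem_cat orbC => ->.
  by rewrite mem_undup mem_cat => ->.
Qed.

Lemma wcomp_wpart v s lam : wdec v s -> wcomp v lam = wpart s lam.
Proof.
move=> vs; rewrite /Defs.wcomp.
have ex : exists x, exists s0, wdec v s0 /\
    ((lam, x) \in s0 \/ (lam \notin map fst s0 /\ x = 0)).
  case: (boolP (lam \in map fst s)) => [/mapP[p ps ->] | lam_s].
    by exists p.2, s; split => //; left; rewrite -surjective_pairing.
  by exists 0, s; split => //; right.
case: (epsilon_spec (inhabits 0) _ ex) => s0 [vs0 [lx | [lam_s0 ->]]]; rewrite (wpart_uniq vs vs0).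
  by rewrite (wpart_mem _ lx) //; case: vs0.
by rewrite wpart_notin.
Qed.

Lemma wcomp0 lam : wcomp 0 lam = 0.
Proof.
have dec0 : wdec 0 [::] by split => //; rewrite big_nil.
by rewrite (wcomp_wpart _ dec0) /wpart big_nil.
Qed.

End WeightSpaces.

Section RootOperators.
Variables (I : finType) (C : I -> I -> int) (d : I -> nat) (th : {ffun I -> int}).
Variables (F : fieldType) (q : F) (n : nat) (E Fo K Ki : Ihat I -> 'M[F]_n).
Hypothesis rep : ULg_rep C d th q E Fo K Ki.
Hypothesis q_neq0 : q != 0.

Local Notation inw := (in_wt C d th q K).
Local Notation wdec := (wdecomp C d th q K).
Local Notation wt_span := (wt_span C d th q K).
Local Notation qj j := (qi C d th q (Some j)).

Definition sroot_wt (i : Ihat I) : weight I := [ffun j => acm C d th (Some j) i].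

Lemma in_wt_conj (A : 'M[F]_n) (c : weight I) lam x :
  (forall j, K (Some j) * A * Ki (Some j) = qj j ^ c j *: A) ->
  inw lam x -> inw (lam + c) (A *m x).
Proof.
move=> KA wx j.
have KA' : K (Some j) *m A = (qj j ^ c j *: A) *m K (Some j).
  by rewrite -KA !mulmxE -mulrA (proj2 (rep_KKi rep _)) mulr1.
rewrite ffunE mulmxA KA' -mulmxA wx -scalemxAl -scalemxAr scalerA mulrC -expfzDr //.
by rewrite expf_neq0.
Qed.

Lemma in_wt_comm (A : 'M[F]_n) lam x :
  (forall j, K (Some j) * A = A * K (Some j)) -> inw lam x -> inw lam (A *m x).
Proof. by move=> KA wx j; rewrite mulmxA mulmxE KA -mulmxE -mulmxA wx -scalemxAr. Qed.

Lemma Ki_K_comm i j : Ki i * K j = K j * Ki i.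
Proof.
have [KKi KiK] := rep_KKi rep i.
by rewrite -[Ki i * K j]mulr1 -KKi !mulrA -(mulrA (Ki i)) (rep_Kcomm rep j i) mulrA KiK mul1r.
Qed.

Lemma in_wt_E i lam x : inw lam x -> inw (lam + sroot_wt i) (E i *m x).
Proof. by apply: in_wt_conj => j; rewrite ffunE (rep_KE rep). Qed.

Lemma in_wt_F i lam x : inw lam x -> inw (lam - sroot_wt i) (Fo i *m x).
Proof. by apply: in_wt_conj => j; rewrite !ffunE (rep_KF rep). Qed.

Lemma in_wt_K i lam x : inw lam x -> inw lam (K i *m x).
Proof. by apply: in_wt_comm => j; rewrite (rep_Kcomm rep). Qed.

Lemma in_wt_Ki i lam x : inw lam x -> inw lam (Ki i *m x).
Proof. by apply: in_wt_comm => j; rewrite Ki_K_comm. Qed.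

Lemma wt_span_mulmx (A : 'M[F]_n) :
  (forall lam x, inw lam x -> exists mu, inw mu (A *m x)) ->
  forall x, wt_span x -> wt_span (A *m x).
Proof.
move=> wA x [s [ws ->]]; elim: s ws => [|p s IH] ws.
  by exists [::]; split=> //; rewrite !big_nil mulmx0.
have [mu wAp] := wA _ _ (ws p (mem_head _ _)).
have [|t [wt At]] := IH; first by move=> p' p's; apply: ws; rewrite inE p's orbT.
exists ((mu, A *m p.2) :: t); split; last by rewrite !big_cons mulmxDr At.
by move=> p'; rewrite inE => /predU1P[-> // | /wt].
Qed.

Lemma irreducible_wt_span : irreducible E Fo K Ki ->
  (exists lam, in_supp C d th q K lam) -> forall x, wt_span x.
Proof.
case=> _ irr [lam [x0 [x0_neq0 wx0]]].
case: (irr wt_span) => [||||//].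
- by exists [::]; rewrite big_nil.
- move=> c x y [sx [wsx ->]] [sy [wsy ->]].
  exists ([seq (p.1, c *: p.2) | p <- sx] ++ sy); split.
    by move=> p; rewrite mem_cat => /orP[/mapP[p' /wsx p's ->] | /wsy //]; apply: in_wtZ.
  by rewrite big_cat big_map scaler_sumr.
- move=> i x xs; split; apply: wt_span_mulmx xs => mu y wy.
  + by exists (mu + sroot_wt i); apply: in_wt_E.
  + by exists (mu - sroot_wt i); apply: in_wt_F.
  + by exists mu; apply: in_wt_K.
  + by exists mu; apply: in_wt_Ki.
- move=> span0; have x0_span : wt_span x0.
    by exists [:: (lam, x0)]; rewrite big_seq1; split=> // p; rewrite inE => /eqP ->.
  by rewrite (span0 _ x0_span) eqxx in x0_neq0.
Qed.

Hypothesis qj_expz_inj : forall j, injective (fun a : int => qj j ^ a).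

Lemma wdecomp_E i v s : wdec v s ->
  wdec (E i *m v) [seq (p.1 + sroot_wt i, E i *m p.2) | p <- s & E i *m p.2 != 0].
Proof.
case=> us ws vs; split.
- rewrite -map_comp (map_comp (+%R^~ (sroot_wt i)) fst) map_inj_uniq; last exact: addIr.
  exact/(subseq_uniq _ us)/map_subseq/filter_subseq.
- move=> p /mapP[p']; rewrite mem_filter => /andP[nz p's] -> /=; split => //.
  by apply: in_wt_E; case: (ws p' p's).
- rewrite vs mulmx_sumr big_map big_filter [RHS]big_mkcond /=.
  by apply: eq_bigr => p _; case: eqP => [->|].
Qed.

Lemma wcomp_E i v lam : (exists s, wdec v s) ->
  wcomp C d th q K (E i *m v) (lam + sroot_wt i) = E i *m wcomp C d th q K v lam.
Proof.
case=> s vs; rewrite (wcomp_wpart qj_expz_inj _ (wdecomp_E i vs)) (wcomp_wpart qj_expz_inj _ vs).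
rewrite /wpart big_map big_filter_cond mulmx_sumr [RHS]big_mkcond [LHS]big_mkcond.
apply: eq_bigr => p _ /=; rewrite (inj_eq (addIr _)).
by case: (p.1 == lam); rewrite ?andbT ?andbF //; case: eqP => [->|].
Qed.

End RootOperators.

Section Dplus.
Variables (I : finType) (C : I -> I -> int) (d : I -> nat) (th : {ffun I -> int}).
Variables (F : fieldType) (q : F) (n : nat) (E K : Ihat I -> 'M[F]_n).
Variable lam0 : weight I.

Local Notation wcomp := (wcomp C d th q K).
Local Notation dplus_wt := (dplus_wt C d th q E K lam0).
Local Notation dplus := (dplus C d th q E K lam0).

Lemma Eword0 s : Eword E s 0 = 0.
Proof. by elim: s => [|i s IH] //=; rewrite IH mulmx0. Qed.

Lemma dplus_wt_descent x : (0 < dplus_wt x)%N ->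
  exists i, E i *m x != 0 /\ (dplus_wt (E i *m x) < dplus_wt x)%N.
Proof.
move=> dx_gt0; have [[w [size_w w_lam0 w_neq0]] _] := nminP (nmin_gt0 dx_gt0).
case/lastP: w size_w w_lam0 w_neq0 => [|w i] size_w.
  by move: dx_gt0; rewrite /Defs.dplus_wt -size_w.
rewrite /Eword foldr_rcons -/(Eword E w _) => w_lam0 w_neq0.
exists i; split; first by apply: contraNneq w_neq0 => ->; rewrite Eword0.
rewrite /Defs.dplus_wt -size_w size_rcons ltnS.
by apply: nmin_le; exists w.
Qed.

Lemma dplus_le_wcomp v mu : wcomp v mu != 0 -> (dplus v <= dplus_wt (wcomp v mu))%N.
Proof. by move=> vmu_neq0; apply: nmin_le; exists mu. Qed.

Lemma dplus_attained v : (0 < dplus v)%N ->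
  exists lam, wcomp v lam != 0 /\ dplus_wt (wcomp v lam) = dplus v.
Proof. by move/nmin_gt0/nminP => [[lam]]; exists lam. Qed.

End Dplus.

Theorem lemma6p8
  (R : realType) (F : closedFieldType) (iota : {rmorphism R[i] -> F}) (q : F)
  (I : finType) (C : I -> I -> int) (d : I -> nat) (th : {ffun I -> int})
  (n : nat) (E Fo K Ki : Ihat I -> 'M[F]_n)
  (lam0 : weight I) (v : 'cV[F]_n) :
  is_closure_of_Cq iota q ->
  finite_cartan C d ->
  highest_root C th ->
  ULg_rep C d th q E Fo K Ki ->
  type1 q K ->
  irreducible E Fo K Ki ->
  is_highest_weight C d th q K lam0 ->
  v != 0 ->
  (0 < dplus C d th q E K lam0 v)%N ->
  exists i : Ihat I,
    E i *m v != 0 /\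
    (dplus C d th q E K lam0 (E i *m v) < dplus C d th q E K lam0 v)%N.
Proof.
move=> [q_transc _] cartan _ rep _ irr [supp_lam0 _] _ dv_gt0.
have q_neq0 := transcendental_neq0 q_transc.
have qj_inj j : injective (fun a : int => qi C d th q (Some j) ^ a).
  exact: (transcendental_expz_inj q_transc (fc_dpos cartan j)).
have v_dec : exists s, wdecomp C d th q K v s.
  by apply: wt_span_wdecomp; apply: (irreducible_wt_span rep q_neq0 irr); exists lam0.
have [lam [_ dvlam]] := dplus_attained dv_gt0.
have [i [Evlam_neq0 dEvlam]] := dplus_wt_descent (etrans (congr1 _ dvlam) dv_gt0).
have Ev_lam := wcomp_E rep q_neq0 qj_inj i lam v_dec.
exists i; split.
  by apply: contraNneq Evlam_neq0 => Ev0; rewrite -Ev_lam Ev0 wcomp0.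
rewrite -dvlam; apply: leq_ltn_trans dEvlam; rewrite -Ev_lam.
by apply: dplus_le_wcomp; rewrite Ev_lam.
Qed.
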